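(* Let $k\ge3$ be odd and $p_k^\star<p\le1$. There exists $\varepsilon=\varepsilon(p,k)>0$ such that for every finite graph $G=(V,E)$ without isolated vertices, every round $t\ge0$, every configuration $\bar{\mathbf x}$ and every $u\in V$, under the $(k,p,\mathcal B)$-Edge-Majority dynamics, $$\mathbb E\big[\phi_u^{(t+1)}\mid \mathbf X^{(t)}=\bar{\mathbf x}\big]\le(1-\varepsilon)\,\phi_{\max}^{(t)}.$$
   Context: $N(u)$ is the neighbourhood of $u$, $\delta_u=|N(u)|$. States are in $\{\mathcal R,\mathcal B\}$; $\mathbf X^{(t)}$ is the configuration at round $t$, $R^{(t)}$ the set of $\mathcal R$ nodes, $\phi_u^{(t)}=|N(u)\cap R^{(t)}|/\delta_u$ and $\phi^{(t)}_{\max}=\max_{u\in V}\phi_u^{(t)}$. $(k,p,\mathcal B)$-Edge-Majority: in each round every node $u$ independently samples $k$ neighbours uniformly with replacement; for each sampled $v$, independently, $u$ sees $v$ as $\mathcal B$ with probability $p$ and otherwise sees $v$'s true current state; $u$'s next state is the state seen more often. $F_{p,k}(x)=\Pr[\mathrm{Bin}(k,(1-p)x)\ge(k+1)/2]$. $p_k^\star\in[1/9,1/2)$ is the (unique) value such that for $0\le p<p_k^\star$ the equation $F_{p,k}(x)=x$ on $[0,1]$ has exactly three solutions, for $p=p_k^\star$ exactly two, and for $p>p_k^\star$ only $0$. *)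

From HB Require Import structures.
From mathcomp Require Import all_boot all_order all_algebra.
From mathcomp Require Import reals.
Set Implicit Arguments. Unset Strict Implicit. Unset Printing Implicit Defensive.
Import Order.TTheory GRing.Theory Num.Theory.
Local Open Scope ring_scope.

(* States: true = R (red), false = B (blue). A configuration is x : {ffun V -> bool}. *)

Section Defs.
Variable R : realType.

(* F_{p,k}(x) = Pr[Bin(k,(1-p)x) >= (k+1)/2] *)
Definition Fpk (p : R) (k : nat) (x : R) : R :=
  \sum_(j < k.+1 | ((k.+1)./2 <= j)%N)
     ('C(k, j))%:R * ((1 - p) * x) ^+ j * (1 - (1 - p) * x) ^+ (k - j).

Definition is_pstar (k : nat) (ps : R) : Prop :=
  [/\ 1 / 9 <= ps, ps < 1 / 2,
     (forall q, 0 <= q -> q < ps ->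
        exists x1 x2 x3, [/\ 0 <= x1 /\ x1 < x2 /\ x2 < x3 /\ x3 <= 1,
          Fpk q k x1 = x1, Fpk q k x2 = x2, Fpk q k x3 = x3 &
          forall x, 0 <= x -> x <= 1 -> Fpk q k x = x -> [\/ x = x1, x = x2 | x = x3]]),
     (exists x1 x2, [/\ 0 <= x1 /\ x1 < x2 /\ x2 <= 1,
          Fpk ps k x1 = x1, Fpk ps k x2 = x2 &
          forall x, 0 <= x -> x <= 1 -> Fpk ps k x = x -> x = x1 \/ x = x2]) &
     (forall q, ps < q -> q <= 1 ->
        forall x, 0 <= x -> x <= 1 -> Fpk q k x = x -> x = 0)].

Variable V : finType.
Variable adj : rel V.

Definition nbrs (u : V) : {set V} := [set v | adj u v].
Definition deg (u : V) : nat := #|nbrs u|.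

Definition phi (x : {ffun V -> bool}) (u : V) : R :=
  (#|[set v in nbrs u | x v]|)%:R / (deg u)%:R.

Definition phimax (x : {ffun V -> bool}) : R := \big[Num.max/0]_(v : V) phi x v.

(* Probability that node u is in state R in the next round of the
   (k,p,B)-Edge-Majority dynamics, from configuration x:
   u samples s : 'I_k -> V (each s i uniform in N(u), independently, with
   replacement), and noise bits b : 'I_k -> bool (b i = true w.p. p, meaning
   s i is seen as B; otherwise its true state is seen). u becomes R iff
   R is seen more often than B. *)
Definition probR (k : nat) (p : R) (x : {ffun V -> bool}) (u : V) : R :=
  \sum_(s : {ffun 'I_k -> V} | [forall i, adj u (s i)])
   \sum_(b : {ffun 'I_k -> bool})
     (\prod_(i < k) (deg u)%:R^-1) *
     (\prod_(i < k) (if b i then p else 1 - p)) *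
     (if (k - #|[set i | ~~ b i && x (s i)]| < #|[set i | ~~ b i && x (s i)]|)%N
      then 1 else 0).

Definition stepProb (k : nat) (p : R) (x y : {ffun V -> bool}) : R :=
  \prod_(v : V) (if y v then probR k p x v else 1 - probR k p x v).

Definition Enext (k : nat) (p : R) (x : {ffun V -> bool}) (u : V) : R :=
  \sum_(y : {ffun V -> bool}) stepProb k p x y * phi y u.

End Defs.

From HB Require Import structures.
From mathcomp Require Import all_boot all_order all_algebra.
From mathcomp Require Import reals.
From mathcomp Require Import classical_sets set_interval topology normedtype derive.
From mathcomp Require Import ring zify.
Set Implicit Arguments. Unset Strict Implicit. Unset Printing Implicit Defensive.
Import Order.TTheory GRing.Theory Num.Theory.
Import numFieldNormedType.Exports.
Local Open Scope ring_scope.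

(* Since each vertex updates independently, E[phi_u'] is the average over v in N(u) of
   the probability that v turns R, and this probability is F_{p,k}(phi_v): the k samples
   of v are independent and each one is seen R with probability (1-p) phi_v.  For p above
   the threshold, 0 is the only fixed point of F_{p,k} on [0,1].  Writing
   F_{p,k}(x) = x H(x) with H a polynomial and H(0) = 0 (as k >= 3), the intermediate value
   theorem gives H < 1 on [0,1], so max H = 1 - eps < 1 there and
   F_{p,k}(x) <= (1 - eps) x <= (1 - eps) phi_max. *)

Lemma continuous_max_lt1 {R : realType} {h : R -> R} :
  {within `[0, 1], continuous h}%classic -> h 0 < 1 ->
  (forall x, 0 < x <= 1 -> h x != 1) ->
  exists2 m, m < 1 & forall x, 0 <= x <= 1 -> h x <= m.
Proof.
move=> hcont h0 hne.
have h_lt1 x : 0 <= x <= 1 -> h x < 1.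
  case/andP=> x0 x1; rewrite ltNge; apply/negP => hx.
  have hcont0x : {within `[0, x], continuous h}%classic.
    by apply: continuous_subspaceW hcont; apply: subset_itvl; rewrite bnd_simp.
  have h01 : Num.min (h 0) (h x) <= 1 <= Num.max (h 0) (h x).
    by rewrite ge_min le_max hx ltW ?orbT.
  have [c] := IVT x0 hcont0x h01.
  rewrite in_itv /= => /andP[c0 cx] hc.
  have [c_eq0 | c_neq0] := eqVneq c 0; first by move: h0; rewrite -c_eq0 hc ltxx.
  by move: (hne c); rewrite lt0r c_neq0 c0 (le_trans cx x1) hc eqxx => /(_ isT).
have [c c01 hmax] := EVT_max ler01 hcont.
exists (h c); first by apply: h_lt1; rewrite in_itv /= in c01.
by move=> x x01; apply: hmax; rewrite in_itv.
Qed.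

Section FpkContraction.
Variables (R : realType) (p : R) (k : nat).

Definition Fpk_quot : {poly R} :=
  \sum_(j < k.+1 | ((k.+1)./2 <= j)%N)
     ('C(k, j)%:R * (1 - p) ^+ j)%:P * 'X ^+ j.-1 * (1 - (1 - p)%:P * 'X) ^+ (k - j).

Lemma Fpk_factor (x : R) : (0 < k)%N -> Fpk p k x = x * Fpk_quot.[x].
Proof.
move=> k_gt0; rewrite /Fpk horner_sum mulr_sumr; apply: eq_bigr => -[[|j] ltjk] //= jk.
  by move: jk; rewrite leq_uphalf_double -muln2; lia.
by rewrite !hornerE /= exprMn !exprS; ring.
Qed.

Lemma Fpk_quot0 : (3 <= k)%N -> Fpk_quot.[0] = 0.
Proof.
move=> k_ge3; rewrite horner_sum big1 // => -[[|[|j]] ltjk] //= jk.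
3: by rewrite !hornerE expr0n mulr0 mul0r.
all: by move: jk; rewrite leq_uphalf_double -muln2; lia.
Qed.

Lemma Fpk_contraction : (3 <= k)%N ->
  (forall x, 0 <= x -> x <= 1 -> Fpk p k x = x -> x = 0) ->
  exists2 eps : R, 0 < eps <= 1 &
    forall x, 0 <= x -> x <= 1 -> Fpk p k x <= (1 - eps) * x.
Proof.
move=> k_ge3 fix0.
have k_gt0 : (0 < k)%N by apply: leq_trans k_ge3.
have quot_ne1 x : 0 < x <= 1 -> Fpk_quot.[x] != 1.
  case/andP=> x_gt0 x_le1; apply/eqP => quot1.
  have := fix0 x (ltW x_gt0) x_le1; rewrite Fpk_factor // quot1 mulr1 => /(_ erefl) x0.
  by move: x_gt0; rewrite x0 ltxx.
have quot_cont : {within `[0, 1], continuous (horner Fpk_quot)}%classic.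
  exact/continuous_subspaceT/continuous_horner.
have quot0_lt1 : Fpk_quot.[0] < 1 by rewrite Fpk_quot0 // ltr01.
have [m m_lt1 quot_le] := continuous_max_lt1 quot_cont quot0_lt1 quot_ne1.
exists (1 - Num.max m 0).
  by rewrite subr_gt0 gt_max m_lt1 ltr01 lerBlDr lerDl le_max lexx orbT.
move=> x x_ge0 x_le1; rewrite Fpk_factor // opprB addrC subrK mulrC.
by rewrite ler_wpM2r // (le_trans (quot_le x _)) ?le_max ?lexx ?x_ge0.
Qed.

End FpkContraction.

Section FiniteSums.
Variable R : comPzRingType.

Lemma prodr_indicator (I : finType) (P : pred I) :
  \prod_(i : I) (if P i then 1 else 0 : R) = if [forall i, P i] then 1 else 0.
Proof.
case: (boolP [forall i, P i]) => [/forallP allP | /forallPn [i Pi]].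
  by apply: big1 => i _; rewrite allP.
by rewrite (bigD1 i) //= (negbTE Pi) mul0r.
Qed.

Lemma sum_card_subsets (T : finType) (f : nat -> R) :
  \sum_(A : {set T}) f #|A| = \sum_(j < #|T|.+1) 'C(#|T|, j)%:R * f j.
Proof.
rewrite (partition_big (fun A : {set T} => inord #|A| : 'I_#|T|.+1) xpredT) //=.
apply: eq_bigr => j _.
rewrite (eq_bigl [in [set A : {set T} | #|A| == j]]); last first.
  by move=> A; rewrite !inE -(inj_eq val_inj) /= inordK // ltnS max_card.
rewrite (eq_bigr (fun=> f j)) => [|A]; last by rewrite inE => /eqP ->.
by rewrite sumr_const card_draws mulr_natl.
Qed.

Lemma sum_ffun_pair (I A B : finType) (F : {ffun I -> A} -> {ffun I -> B} -> R) :
  \sum_(s : {ffun I -> A}) \sum_(b : {ffun I -> B}) F s b =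
  \sum_(t : {ffun I -> A * B}) F [ffun i => (t i).1] [ffun i => (t i).2].
Proof.
rewrite pair_big /=.
pose unzip (t : {ffun I -> A * B}) := ([ffun i => (t i).1], [ffun i => (t i).2]).
pose zip (sb : {ffun I -> A} * {ffun I -> B}) := [ffun i => (sb.1 i, sb.2 i)].
rewrite (reindex unzip) //=; exists zip => [t _ | [s b] _].
  by apply/ffunP => i; rewrite !ffunE; case: (t i).
by congr pair; apply/ffunP => i; rewrite !ffunE.
Qed.

Lemma iid_count_binomial (T : finType) (w : T -> R) (a : pred T) (g : nat -> R) n :
  \sum_(t : {ffun 'I_n -> T}) (\prod_i w (t i)) * g #|[set i | a (t i)]| =
  \sum_(j < n.+1) 'C(n, j)%:R *
    ((\sum_(z | a z) w z) ^+ j * (\sum_(z | ~~ a z) w z) ^+ (n - j) * g j).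
Proof.
(* Split according to the set S of trials that land in [a]. *)
pose wS (S : {set 'I_n}) i z := w z * (if (i \in S) == a z then 1 else 0).
have countE (t : {ffun 'I_n -> T}) : g #|[set i | a (t i)]| =
    \sum_(S : {set 'I_n}) (if [forall i, (i \in S) == a (t i)] then 1 else 0) * g #|S|.
  rewrite (bigD1 [set i | a (t i)]) //= big1 => [|S neqS].
    by rewrite ifT ?mul1r ?addr0 //; apply/forallP => i; rewrite inE.
  case: forallP => [eqS | _]; rewrite ?mul0r //; case/eqP: neqS.
  by apply/setP => i; rewrite inE; apply/eqP.
have trialsE S : \sum_(t : {ffun 'I_n -> T}) \prod_i wS S i (t i) =
    (\sum_(z | a z) w z) ^+ #|S| * (\sum_(z | ~~ a z) w z) ^+ (n - #|S|).
  have trialE i : \sum_z wS S i z =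
      if i \in S then \sum_(z | a z) w z else \sum_(z | ~~ a z) w z.
    rewrite /wS; case: (i \in S); rewrite [RHS]big_mkcond; apply: eq_bigr => z _;
      by case: (a z); rewrite ?mulr1 ?mulr0.
  rewrite -bigA_distr_bigA (eq_bigr _ (fun i _ => trialE i)) (bigID [in S]) /=.
  rewrite (eq_bigr (fun=> \sum_(z | a z) w z)) => [|i ->] //.
  rewrite [X in _ * X](eq_bigr (fun=> \sum_(z | ~~ a z) w z)) => [|i /negbTE ->] //.
  rewrite !prodr_const; congr (_ * _ ^+ _).
  have := max_card S; rewrite card_ord => leSn.
  by apply/eqP; rewrite -(eqn_add2l #|S|) cardC card_ord subnKC.
pose F j := (\sum_(z | a z) w z) ^+ j * (\sum_(z | ~~ a z) w z) ^+ (n - j) * g j.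
transitivity (\sum_(S : {set 'I_n}) F #|S|); last by rewrite sum_card_subsets card_ord.
under eq_bigr => t _ do rewrite countE big_distrr.
rewrite exchange_big /=; apply: eq_bigr => S _.
rewrite /F -trialsE big_distrl /=; apply: eq_bigr => t _.
by rewrite /wS big_split /= prodr_indicator mulrA.
Qed.

Lemma sum_bernoulli_coord (I : finType) (a : I -> R) (v : I) :
  \sum_(y : {ffun I -> bool}) (\prod_w (if y w then a w else 1 - a w)) * (if y v then 1 else 0)
  = a v.
Proof.
pose h w (b : bool) := (if b then a w else 1 - a w) * (if w == v then (if b then 1 else 0) else 1).
transitivity (\prod_w \sum_(b : bool) h w b).
  rewrite bigA_distr_bigA; apply: eq_bigr => y _.
  rewrite /h big_split /=; congr (_ * _).
  by rewrite [RHS](bigD1 v) //= eqxx big1 ?mulr1 // => w /negbTE ->.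
rewrite (bigD1 v) //= [X in _ * X]big1 => [|w /negbTE wv].
  by rewrite big_bool /h /= eqxx mulr1 mulr0 addr0 mulr1.
by rewrite big_bool /h /= wv !mulr1 addrC subrK.
Qed.

Lemma card_setI_pred (T : finType) (A : {set T}) (P : pred T) :
  (#|[set v in A | P v]|)%:R = \sum_(v in A) (if P v then 1 else 0 : R).
Proof.
rewrite -big_mkcondr /= (eq_bigl [in [set v in A | P v]]) => [|v]; last by rewrite inE.
by rewrite sumr_const.
Qed.

End FiniteSums.

Lemma odd_majority (k j : nat) : odd k -> (k - j < j)%N = ((k.+1)./2 <= j)%N.
Proof.
move=> k_odd; have := odd_double_half k; rewrite k_odd /= => k_eq.
rewrite -k_eq uphalf_half oddD odd_double /= add0n uphalf_double -!muln2.
by apply/idP/idP; lia.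
Qed.

Section EdgeMajority.
Variables (R : realType) (V : finType) (adj : rel V).

Lemma phi_ge0 (x : {ffun V -> bool}) u : 0 <= phi R adj x u.
Proof. by rewrite /phi divr_ge0. Qed.

Lemma phi_le1 (x : {ffun V -> bool}) u : phi R adj x u <= 1.
Proof.
have [deg0 | deg_gt0] := posnP (deg adj u); first by rewrite /phi deg0 invr0 mulr0 ler01.
rewrite /phi ler_pdivrMr ?ltr0n // mul1r ler_nat.
by apply: subset_leq_card; apply/fintype.subsetP => v; rewrite inE => /andP[].
Qed.

Lemma phi_le_phimax (x : {ffun V -> bool}) u : phi R adj x u <= phimax R adj x.
Proof. by rewrite /phimax (bigD1 u) //= le_max lexx. Qed.

Lemma Enext_mean_probR k (p : R) x u :
  Enext adj k p x u = (deg adj u)%:R^-1 * \sum_(v in nbrs adj u) probR adj k p x v.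
Proof.
rewrite /Enext /phi.
under eq_bigr => y _ do rewrite card_setI_pred [_ / _]mulrC mulrCA mulr_sumr.
rewrite -mulr_sumr exchange_big /=; congr (_ * _); apply: eq_bigr => v _.
by rewrite /stepProb sum_bernoulli_coord.
Qed.

Section Sample.
Variables (k : nat) (p : R) (x : {ffun V -> bool}) (v : V).

Definition sample_weight (z : V * bool) : R :=
  (deg adj v)%:R^-1 * (if adj v z.1 then 1 else 0) * (if z.2 then p else 1 - p).

Definition seen_red (z : V * bool) : bool := ~~ z.2 && x z.1.

Lemma probR_iid : probR adj k p x v =
  \sum_(t : {ffun 'I_k -> V * bool}) (\prod_i sample_weight (t i)) *
    (if (k - #|[set i | seen_red (t i)]| < #|[set i | seen_red (t i)]|)%N then 1 else 0).
Proof.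
have if_mul1 (c : bool) (y : R) : (if c then y else 0) = (if c then 1 else 0) * y.
  by case: c; rewrite ?mul1r ?mul0r.
rewrite /probR big_mkcond /=.
under eq_bigr => s _ do rewrite if_mul1 -prodr_indicator mulr_sumr.
rewrite sum_ffun_pair; apply: eq_bigr => t _.
have seenE : [set i | ~~ [ffun i => (t i).2] i && x ([ffun i => (t i).1] i)] =
             [set i | seen_red (t i)].
  by apply/setP => i; rewrite !inE !ffunE.
rewrite seenE /sample_weight !big_split /=.
under eq_bigr do rewrite ffunE.
under [X in _ * (_ * X * _)]eq_bigr do rewrite ffunE.
by rewrite !mulrA; congr (_ * _ * _); exact: mulrC.
Qed.

Lemma sum_sample_weight : (0 < deg adj v)%N -> \sum_z sample_weight z = 1.
Proof.
move=> deg_gt0; rewrite -(pair_bigA _ (fun v' b => sample_weight (v', b))) /=.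
under eq_bigr do rewrite big_bool /sample_weight /= -mulrDr addrC subrK mulr1.
rewrite -mulr_sumr -big_mkcond sumr_const -[#|_|]cardsE mulVf //.
by rewrite pnatr_eq0 -lt0n.
Qed.

Lemma sum_seen_red_weight :
  \sum_(z | seen_red z) sample_weight z = (1 - p) * phi R adj x v.
Proof.
rewrite big_mkcond -(pair_bigA _ (fun v' b => if seen_red (v', b) then sample_weight (v', b) else 0)).
rewrite /phi card_setI_pred mulr_suml mulr_sumr [RHS]big_mkcond /=; apply: eq_bigr => v' _.
rewrite big_bool /seen_red /sample_weight /nbrs inE /=.
by case: (adj v v'); case: (x v'); rewrite /= ?mulr0 ?mul0r ?add0r; ring.
Qed.

Lemma probR_Fpk : odd k -> (0 < deg adj v)%N -> probR adj k p x v = Fpk p k (phi R adj x v).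
Proof.
move=> k_odd deg_gt0.
have sum_unseen : \sum_(z | ~~ seen_red z) sample_weight z = 1 - (1 - p) * phi R adj x v.
  apply/eqP; rewrite -sum_seen_red_weight eq_sym subr_eq -(sum_sample_weight deg_gt0).
  by rewrite (bigID seen_red) addrC.
rewrite probR_iid (@iid_count_binomial R _ _ _ (fun n => if (k - n < n)%N then 1 else 0)).
rewrite sum_seen_red_weight sum_unseen /Fpk [RHS]big_mkcond.
apply: eq_bigr => j _; rewrite odd_majority //.
by case: ifP => _; rewrite ?mulr1 ?mulr0 ?mulrA.
Qed.

End Sample.

Lemma Enext_le k (p : R) x u (c : R) : (0 < deg adj u)%N ->
  (forall v, adj u v -> probR adj k p x v <= c) -> Enext adj k p x u <= c.
Proof.
move=> deg_gt0 probR_le; rewrite Enext_mean_probR mulrC ler_pdivrMr ?ltr0n //.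
apply: (@le_trans _ _ (\sum_(v in nbrs adj u) c)); last by rewrite sumr_const mulr_natr.
by apply: ler_sum => v; rewrite inE; exact: probR_le.
Qed.

End EdgeMajority.

Theorem lemma5p5 (R : realType) (k : nat) (hk3 : (3 <= k)%N) (hkodd : odd k)
  (ps p : R) (hps : is_pstar k ps) (hpsp : ps < p) (hp1 : p <= 1) :
  exists eps : R, 0 < eps /\
    forall (V : finType) (adj : rel V),
      symmetric adj -> irreflexive adj -> (forall u, exists v, adj u v) ->
      forall (x : {ffun V -> bool}) (u : V),
        @Enext R V adj k p x u <= (1 - eps) * @phimax R V adj x.
Proof.
case: hps => _ _ _ _ fix0_above.
have [eps /andP[eps_gt0 eps_le1] Fpk_le] := Fpk_contraction hk3 (fix0_above p hpsp hp1).
exists eps; split => // V adj _ _ nonisolated x u.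
have deg_gt0 w : (0 < deg adj w)%N.
  by have [v wv] := nonisolated w; apply/card_gt0P; exists v; rewrite inE.
apply: Enext_le => // v _; rewrite probR_Fpk //.
apply: le_trans (Fpk_le _ (phi_ge0 _ _ _ _) (phi_le1 _ _ _ _)) _.
by rewrite ler_wpM2l ?subr_ge0 ?phi_le_phimax.
Qed.
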